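(* In the one-way trading setting, for every $\pi\ge1$, $$\Phi_\Delta(\pi)=\frac{\Delta}{\pi}\,(1+\ln\theta),\qquad \theta=M/m.$$
   Context: One-way trading: fix $\Delta>0$, $0<m\le M$, $\theta=M/m$. The revenue function at time $t$ is $g_t(v)=p(t)\,v$ on $[0,\Delta]$ with price $p(t)\in[m,M]$; an input is a finite price sequence $\sigma=(p(1),\dots,p(T))$, $T\ge1$. The offline optimum on $\sigma^{[1:t]}=(p(1),\dots,p(t))$ is $\eta_{OPT}(\sigma^{[1:t]})=\Delta\max_{s\le t}p(s)$. For $\pi\ge1$, CR-Pursuit($\pi$) sells at time $t$ the quantity $\bar v_t=\frac{\Delta}{\pi p(t)}\big(\max_{s\le t}p(s)-\max_{s\le t-1}p(s)\big)$, with the maximum over an empty set equal to $0$. $\Phi_\Delta(\pi)$ is the supremum over all finite inputs of $\sum_t\bar v_t$. *)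

From Stdlib Require Import Reals Lra List.
Open Scope R_scope.

(* Maximum of a list of reals, with the maximum over the empty list equal to 0
   (the convention of the paper). *)
Definition maxR (l : list R) : R := fold_left Rmax l 0.

(* Running maximum max_{s <= t} p(s) of the input sigma (time indices 1..T,
   list position t-1); prefix_max sigma 0 = 0. *)
Definition prefix_max (sigma : list R) (t : nat) : R := maxR (firstn t sigma).

Definition eta_OPT (Delta : R) (sigma : list R) (t : nat) : R :=
  Delta * prefix_max sigma t.

(* Quantity sold by CR-Pursuit(pi) at time t (1 <= t <= T), p(t) = nth (t-1). *)
Definition cr_pursuit_amount (Delta pi : R) (sigma : list R) (t : nat) : R :=
  Delta / (pi * nth (t - 1) sigma 0) *
  (prefix_max sigma t - prefix_max sigma (t - 1)).

Definition cr_pursuit_total (Delta pi : R) (sigma : list R) : R :=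
  fold_right Rplus 0
    (map (cr_pursuit_amount Delta pi sigma) (seq 1 (length sigma))).

Definition valid_input (m M : R) (sigma : list R) : Prop :=
  (1 <= length sigma)%nat /\ Forall (fun p => m <= p <= M) sigma.

Definition is_Phi (Delta m M pi : R) (phi : R) : Prop :=
  is_lub (fun x => exists sigma, valid_input m M sigma /\
                                 x = cr_pursuit_total Delta pi sigma) phi.

From Stdlib Require Import Reals List Lra Lia.
Open Scope R_scope.

(* Appending a price x to an input l changes the total sold by CR-Pursuit by
   Delta/(pi x) * (max(a, x) - a), where a is the running maximum of l
   ([cr_pursuit_total_snoc]).

   Upper bound: the increment (max(a, x) - a)/x never exceeds
   ln(max(a, x)/a) ([increment_le_ln], from 1 - 1/y <= ln y), so by induction
   the total on a nonempty input is at most Delta/pi * (1 + ln(max/m)), and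
   max <= M.

   Lower bound: on the geometric input m e^{kc}, k = 0..n, every price is a
   new maximum and the total is Delta/pi * (1 + n (1 - e^{-c}))
   ([geometric_prices_total]).  With c = ln(theta)/n and 1 - e^{-c} >= c - c^2
   this is at least Delta/pi * (1 + ln theta) - Delta/pi * (ln theta)^2 / n,
   and letting n grow gives the matching lower bound for any upper bound of
   the set of totals ([le_of_forall_sub_div_le]). *)

Lemma ln_le (x y : R) : 0 < x -> x <= y -> ln x <= ln y.
Proof.
  intros Hx [Hxy | ->]; [left; apply ln_increasing |]; lra.
Qed.

Lemma exp_le (x y : R) : x <= y -> exp x <= exp y.
Proof.
  intros [Hxy | ->]; [left; apply exp_increasing |]; lra.
Qed.

Lemma ln_div_nonneg (x m : R) : 0 < m -> m <= x -> 0 <= ln (x / m).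
Proof.
  intros Hm Hmx. rewrite <- ln_1. apply ln_le; [lra |].
  apply (Rmult_le_reg_r m); [lra |].
  unfold Rdiv. rewrite Rmult_assoc, Rinv_l; lra.
Qed.

(* The tangent-line bound for ln, read off from 1 + t <= e^t at t = -ln y. *)
Lemma one_sub_inv_le_ln (y : R) : 0 < y -> 1 - / y <= ln y.
Proof.
  intros Hy.
  pose proof (exp_ineq1_le (- ln y)) as Htangent.
  rewrite exp_Ropp, exp_ln in Htangent by exact Hy.
  lra.
Qed.

(* A quadratic lower bound on 1 - e^{-c}: e^{-c} <= 1/(1+c) <= 1 - c + c^2. *)
Lemma sub_sqr_le_one_sub_exp_opp (c : R) : 0 <= c -> c - c * c <= 1 - exp (- c).
Proof.
  intros Hc.
  pose proof (exp_ineq1_le c) as Htangent.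
  assert (Hinv : / exp c <= / (1 + c)) by (apply Rinv_le_contravar; lra).
  assert (Hquad : / (1 + c) <= 1 - c + c * c).
  { apply (Rmult_le_reg_l (1 + c)); [lra |].
    rewrite Rinv_r by lra. nra. }
  rewrite exp_Ropp. lra.
Qed.

Lemma increment_le_ln (a x : R) :
  0 < a -> 0 < x -> (Rmax a x - a) / x <= ln (Rmax a x / a).
Proof.
  intros Ha Hx. destruct (Rle_dec x a) as [Hxa | Hxa].
  - rewrite Rmax_left, Rminus_diag, Rdiv_diag, ln_1 by lra. lra.
  - rewrite Rmax_right by lra.
    replace ((x - a) / x) with (1 - / (x / a)) by (field; lra).
    apply one_sub_inv_le_ln, Rdiv_lt_0_compat; lra.
Qed.

Lemma le_of_forall_sub_div_le (A K b : R) :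
  (forall n : nat, (1 <= n)%nat -> A - K / INR n <= b) -> A <= b.
Proof.
  intros Hn. apply Rnot_lt_le. intros Hlt.
  destruct (INR_archimed (A - b) (Rabs K) ltac:(lra)) as [n Hnarch].
  destruct n as [|n]; [simpl in Hnarch; pose proof (Rabs_pos K); lra |].
  assert (HnR : 0 < INR (S n)) by (apply lt_0_INR; lia).
  assert (Hsmall : K / INR (S n) < A - b).
  { apply (Rmult_lt_reg_r (INR (S n))); [lra |].
    unfold Rdiv. rewrite Rmult_assoc, Rinv_l by lra.
    pose proof (Rle_abs K). lra. }
  pose proof (Hn (S n) ltac:(lia)). lra.
Qed.

Lemma maxR_snoc (l : list R) (x : R) : maxR (l ++ x :: nil) = Rmax (maxR l) x.
Proof. unfold maxR. rewrite fold_left_app. reflexivity. Qed.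

Lemma maxR_ge_In (l : list R) (x : R) : In x l -> x <= maxR l.
Proof.
  induction l as [|y l IH] using rev_ind; [intros [] |].
  rewrite maxR_snoc. intros Hin. apply in_app_or in Hin as [Hin | [<- | []]].
  - pose proof (IH Hin). pose proof (Rmax_l (maxR l) y). lra.
  - apply Rmax_r.
Qed.

Lemma maxR_le (l : list R) (M : R) : 0 <= M -> Forall (fun q => q <= M) l -> maxR l <= M.
Proof.
  intros HM. induction l as [|x l IH] using rev_ind; [intros _; exact HM |].
  intros Hall. apply Forall_app in Hall as [Hl Hx]. inversion Hx; subst.
  rewrite maxR_snoc. apply Rmax_lub; auto.
Qed.

Lemma fold_right_Rplus_init (l : list R) (c : R) :
  fold_right Rplus c l = fold_right Rplus 0 l + c.
Proof. induction l as [|y l IH]; simpl; [| rewrite IH]; lra. Qed.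

Lemma cr_pursuit_total_snoc (Delta pi : R) (l : list R) (x : R) :
  cr_pursuit_total Delta pi (l ++ x :: nil) =
  cr_pursuit_total Delta pi l + Delta / (pi * x) * (Rmax (maxR l) x - maxR l).
Proof.
  unfold cr_pursuit_total.
  rewrite length_app, Nat.add_1_r, seq_S, map_app, fold_right_app,
    fold_right_Rplus_init.
  f_equal.
  - f_equal. apply map_ext_in. intros t Ht. apply in_seq in Ht.
    unfold cr_pursuit_amount, prefix_max.
    rewrite !firstn_app, app_nth1 by lia.
    replace (t - length l)%nat with 0%nat by lia.
    replace (t - 1 - length l)%nat with 0%nat by lia.
    simpl. rewrite !app_nil_r. reflexivity.
  - simpl. unfold cr_pursuit_amount, prefix_max.
    replace (S (length l) - 1)%nat with (length l) by lia.
    rewrite nth_middle, firstn_all2 by (rewrite length_app; simpl; lia).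
    rewrite firstn_app, Nat.sub_diag, firstn_all. simpl.
    rewrite app_nil_r, maxR_snoc. lra.
Qed.

Lemma cr_pursuit_total_le_ln (Delta pi m : R) (l : list R) :
  0 < Delta -> 0 < pi -> 0 < m -> l <> nil -> Forall (Rle m) l ->
  cr_pursuit_total Delta pi l <= Delta / pi * (1 + ln (maxR l / m)).
Proof.
  intros HD Hpi Hm. induction l as [|x l IH] using rev_ind; [congruence |].
  intros _ Hall. apply Forall_app in Hall as [Hl Hx]. apply Forall_inv in Hx.
  assert (HDpi : 0 < Delta / pi) by (apply Rdiv_lt_0_compat; lra).
  rewrite cr_pursuit_total_snoc, maxR_snoc.
  replace (Delta / (pi * x) * (Rmax (maxR l) x - maxR l))
    with (Delta / pi * ((Rmax (maxR l) x - maxR l) / x)) by (field; lra).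
  destruct l as [|y l'].
  - change (maxR nil) with 0. rewrite Rmax_right by lra.
    pose proof (ln_div_nonneg x m Hm Hx).
    replace ((x - 0) / x) with 1 by (field; lra).
    change (cr_pursuit_total Delta pi nil) with 0. nra.
  - set (a := maxR (y :: l')) in *.
    assert (Ha : m <= a).
    { apply Rle_trans with y; [exact (Forall_inv Hl) | apply maxR_ge_In; left; reflexivity]. }
    assert (Hsplit : ln (Rmax a x / m) = ln (Rmax a x / a) + ln (a / m)).
    { pose proof (Rmax_l a x).
      rewrite <- ln_mult by (apply Rdiv_lt_0_compat; lra). f_equal. field; lra. }
    pose proof (increment_le_ln a x ltac:(lra) ltac:(lra)) as Hincrement.
    pose proof (IH ltac:(congruence) Hl) as Hprefix.
    rewrite Hsplit. nra.
Qed.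

Definition geometric_prices (m c : R) (n : nat) : list R :=
  map (fun k => m * exp (INR k * c)) (seq 0 (S n)).

Lemma geometric_prices_snoc (m c : R) (n : nat) :
  geometric_prices m c (S n) =
  geometric_prices m c n ++ m * exp (INR (S n) * c) :: nil.
Proof. unfold geometric_prices. rewrite (seq_S (S n)), map_app. reflexivity. Qed.

(* Every geometric price is a new maximum, so each step after the first sells
   Delta/pi * (1 - e^{-c}). *)
Lemma geometric_prices_total (Delta pi m c : R) (n : nat) :
  0 < pi -> 0 < m -> 0 <= c ->
  maxR (geometric_prices m c n) = m * exp (INR n * c) /\
  cr_pursuit_total Delta pi (geometric_prices m c n) =
  Delta / pi * (1 + INR n * (1 - exp (- c))).
Proof.
  intros Hpi Hm Hc. induction n as [|n [Hmax Htotal]].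
  - change (geometric_prices m c 0) with (nil ++ m * exp (INR 0 * c) :: nil).
    rewrite maxR_snoc, cr_pursuit_total_snoc.
    change (maxR nil) with 0. change (cr_pursuit_total Delta pi nil) with 0.
    change (INR 0) with 0. rewrite Rmult_0_l, exp_0, Rmult_1_r, Rmax_right by lra.
    split; [reflexivity | field; lra].
  - rewrite geometric_prices_snoc, maxR_snoc, cr_pursuit_total_snoc, Hmax, Htotal.
    assert (Hstep : m * exp (INR (S n) * c) = m * exp (INR n * c) * exp c).
    { rewrite S_INR, Rmult_plus_distr_r, Rmult_1_l, exp_plus. ring. }
    assert (Hprev : 0 < m * exp (INR n * c)) by (pose proof (exp_pos (INR n * c)); nra).
    assert (Hgrow : 1 <= exp c) by (pose proof (exp_ineq1_le c); lra).
    rewrite Hstep, Rmax_right by nra.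
    split; [reflexivity |].
    rewrite exp_Ropp, S_INR. pose proof (exp_pos c). pose proof (exp_pos (INR n * c)).
    field; repeat split; lra.
Qed.

Lemma geometric_prices_valid (m M c : R) (n : nat) :
  0 < m -> m <= M -> 0 <= c -> INR n * c <= ln (M / m) ->
  valid_input m M (geometric_prices m c n).
Proof.
  intros Hm HM Hc Hnc. split.
  - unfold geometric_prices. rewrite length_map, length_seq. lia.
  - apply Forall_forall. intros q Hq. unfold geometric_prices in Hq.
    apply in_map_iff in Hq as [k [<- Hk]]. apply in_seq in Hk.
    assert (Hkn : INR k <= INR n) by (apply le_INR; lia).
    assert (Hkc : 0 <= INR k * c) by (apply Rmult_le_pos; [apply pos_INR | lra]).
    split.
    + pose proof (exp_ineq1_le (INR k * c)). nra.
    + assert (Hexp : exp (INR k * c) <= M / m) by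
        (rewrite <- (exp_ln (M / m)) by (apply Rdiv_lt_0_compat; lra);
         apply exp_le; nra).
      apply (Rmult_le_compat_l m) in Hexp; [| lra].
      replace (m * (M / m)) with M in Hexp by (field; lra). exact Hexp.
Qed.

Lemma cr_pursuit_total_near_sup (Delta m M pi : R) (n : nat) :
  0 < Delta -> 0 < m -> m <= M -> 0 < pi -> (1 <= n)%nat ->
  exists sigma, valid_input m M sigma /\
    Delta / pi * (1 + ln (M / m)) - Delta / pi * (ln (M / m) * ln (M / m)) / INR n
      <= cr_pursuit_total Delta pi sigma.
Proof.
  intros HD Hm HM Hpi Hn.
  set (L := ln (M / m)).
  assert (HL : 0 <= L) by (apply ln_div_nonneg; lra).
  assert (HnR : 1 <= INR n) by (apply (le_INR 1); lia).
  set (c := L / INR n).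
  assert (Hc : 0 <= c) by (apply Rmult_le_pos; [| left; apply Rinv_0_lt_compat]; lra).
  assert (Hnc : INR n * c = L) by (unfold c; field; lra).
  exists (geometric_prices m c n). split.
  - apply geometric_prices_valid; [lra | lra | lra | rewrite Hnc; apply Rle_refl].
  - destruct (geometric_prices_total Delta pi m c n Hpi Hm Hc) as [_ ->].
    pose proof (sub_sqr_le_one_sub_exp_opp c Hc) as Hquad.
    assert (HDpi : 0 < Delta / pi) by (apply Rdiv_lt_0_compat; lra).
    assert (Hgain : L - L * L / INR n <= INR n * (1 - exp (- c))).
    { replace (L - L * L / INR n) with (INR n * (c - c * c)) by (unfold c; field; lra).
      apply Rmult_le_compat_l; lra. }
    replace (Delta / pi * (1 + L) - Delta / pi * (L * L) / INR n)
      with (Delta / pi * (1 + (L - L * L / INR n))) by (field; lra).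
    apply Rmult_le_compat_l; lra.
Qed.

Lemma cr_pursuit_total_le_sup (Delta m M pi : R) (sigma : list R) :
  0 < Delta -> 0 < m -> 0 < pi -> valid_input m M sigma ->
  cr_pursuit_total Delta pi sigma <= Delta / pi * (1 + ln (M / m)).
Proof.
  intros HD Hm Hpi [Hlen Hall].
  destruct sigma as [|p prices]; [simpl in Hlen; lia |].
  pose proof (Forall_inv Hall) as Hp.
  assert (Hmp : m <= maxR (p :: prices)).
  { apply Rle_trans with p; [lra | apply maxR_ge_In; left; auto]. }
  assert (HmaxM : maxR (p :: prices) <= M).
  { apply maxR_le; [| eapply Forall_impl; [| exact Hall]; simpl; intros q Hq]; lra. }
  assert (Hln : ln (maxR (p :: prices) / m) <= ln (M / m)).
  { apply ln_le; [apply Rdiv_lt_0_compat |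
      apply Rmult_le_compat_r; [left; apply Rinv_0_lt_compat |]]; lra. }
  assert (HDpi : 0 < Delta / pi) by (apply Rdiv_lt_0_compat; lra).
  pose proof (cr_pursuit_total_le_ln Delta pi m (p :: prices) HD Hpi Hm
    ltac:(discriminate) (Forall_impl _ (fun q (Hq : m <= q <= M) => proj1 Hq) Hall)).
  nra.
Qed.

Theorem mainTheorem12 (Delta m M pi : R) :
  0 < Delta -> 0 < m -> m <= M -> 1 <= pi ->
  is_Phi Delta m M pi (Delta / pi * (1 + ln (M / m))).
Proof.
  intros HD Hm HM Hpi. split.
  - intros x [sigma [Hvalid ->]].
    apply cr_pursuit_total_le_sup; [exact HD | exact Hm | lra | exact Hvalid].
  - intros b Hb.
    apply (le_of_forall_sub_div_le _ (Delta / pi * (ln (M / m) * ln (M / m)))).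
    intros n Hn.
    destruct (cr_pursuit_total_near_sup Delta m M pi n HD Hm HM ltac:(lra) Hn)
      as [sigma [Hvalid Hnear]].
    apply Rle_trans with (1 := Hnear), Hb. eauto.
Qed.
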